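(* Let $P_d$ be the left path on $d$ vertices (each vertex except the last is the parent of the next via a left-child edge), with all edges contiguous, and let $x,x'$ be two distinct vertices of $P_d$. Let $(P,e)$ be any tree pattern, and let $Q$ and $Q'$ be the tree patterns obtained from $(P_d,1\cdots1)$ by attaching $(P,e)$ as the right subtree of $x$, respectively of $x'$, via a non-contiguous edge. Then $Q$ and $Q'$ are Wilf-equivalent.
   Context: $\mathcal{T}_n$ is the set of binary trees on $n$ vertices labeled $1,\dots,n$ by the search tree property (labels of a combined tree are reassigned by this property). $c_L,c_R,p$: left child, right child, parent. A tree pattern is $(P,e)$, $P\in\mathcal{T}_k$, $e\colon[k]\setminus\{\text{root}\}\to\{0,1\}$; the edge $(i,p(i))$ is contiguous if $e(i)=1$, non-contiguous if $e(i)=0$. $T\in\mathcal{T}_n$ contains $(P,e)$ if there is an injection $f\colon[k]\to[n]$ such that for every non-root $i$ of $P$: if $e(i)=1$, $f(i)$ is the left (resp. right) child of $f(p(i))$ when $i$ is the left (resp. right) child of $p(i)$; if $e(i)=0$, $f(i)$ lies in the left (resp. right) subtree of $f(p(i))$. $\mathcal{T}_n(Q)$ is the set of avoiders of $Q$. $Q,Q'$ are Wilf-equivalent if $|\mathcal{T}_n(Q)|=|\mathcal{T}_n(Q')|$ for all $n\ge0$. *)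

From mathcomp Require Import all_boot.
From Stdlib Require Import ClassicalEpsilon.
Set Implicit Arguments. Unset Strict Implicit. Unset Printing Implicit Defensive.

(* Unlabelled binary tree shapes; labels 1..n are determined by the search
   tree property (in-order), so a tree in T_n is just a shape with n nodes. *)
Inductive btree := Leaf | Node of btree & btree.

Fixpoint bsize (t : btree) : nat :=
  if t is Node l r then (bsize l + bsize r).+1 else 0.

(* Vertices of a tree are named by their address from the root:
   false = go to left child, true = go to right child.
   The parent of [rcons a b] is [a]; it is the left child if b = false. *)
Fixpoint nodes (t : btree) : seq (seq bool) :=
  if t is Node l r then
    [::] :: map (cons false) (nodes l) ++ map (cons true) (nodes r)
  else [::].

Fixpoint trees_upto (h : nat) : seq btree :=
  if h is h'.+1 then
    Leaf :: [seq Node lr.1 lr.2 | lr <- [seq (l, r) | l <- trees_upto h', r <- trees_upto h']]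
  else [:: Leaf].

Definition trees (n : nat) : seq btree :=
  [seq t <- trees_upto n | bsize t == n].

(* A tree pattern (P, e): e gives, for every non-root vertex a of P,
   whether the edge (a, parent a) is contiguous (true) or not (false).
   Values of e at the root / non-vertices are irrelevant. *)
Record pattern := Pattern { pat_tree : btree; pat_e : seq bool -> bool }.

(* T contains (P,e): an injection f from vertices of P to vertices of T
   respecting contiguous edges (child on the same side) and non-contiguous
   edges (descendant in the subtree on the same side). *)
Definition contains (T : btree) (Q : pattern) : Prop :=
  exists f : seq bool -> seq bool,
    {in nodes (pat_tree Q) &, injective f} /\
    {in nodes (pat_tree Q), forall a, f a \in nodes T} /\
    (forall (a : seq bool) (b : bool), rcons a b \in nodes (pat_tree Q) ->
       if pat_e Q (rcons a b) then f (rcons a b) = rcons (f a) b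
       else exists s, f (rcons a b) = rcons (f a) b ++ s).

Definition containsb (T : btree) (Q : pattern) : bool :=
  if excluded_middle_informative (contains T Q) then true else false.

Definition num_avoiders (Q : pattern) (n : nat) : nat :=
  count (fun T => ~~ containsb T Q) (trees n).

Definition wilf_equiv (Q Q' : pattern) : Prop :=
  forall n, num_avoiders Q n = num_avoiders Q' n.

Fixpoint left_path (d : nat) : btree :=
  if d is d'.+1 then Node (left_path d') Leaf else Leaf.

(* Left path on d vertices with P attached as right subtree of its i-th vertex
   (vertex at address nseq i false, i counted from 0 at the root). *)
Fixpoint left_path_attach (d i : nat) (P : btree) : btree :=
  match d, i with
  | 0, _ => Leaf
  | d'.+1, 0 => Node (left_path d') P
  | d'.+1, i'.+1 => Node (left_path_attach d' i' P) Leaf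
  end.

(* Edge labelling: path edges contiguous; the edge from the root of P to the
   path vertex is non-contiguous; edges inside P keep their label e. *)
Definition attach_e (i : nat) (e : seq bool -> bool) (a : seq bool) : bool :=
  let pre := rcons (nseq i false) true in
  if (size pre <= size a) && (take (size pre) a == pre) then
    let a' := drop (size pre) a in
    if a' == [::] then false else e a'
  else true.

Definition attach_pattern (d i : nat) (Pe : pattern) : pattern :=
  Pattern (left_path_attach d i (pat_tree Pe)) (attach_e i (pat_e Pe)).

(* Read a tree T along its left spine v_0, v_1, ..., v_(L-1) (the root and its
   iterated left children), with right subtrees R_0, ..., R_(L-1).  An occurrence
   of Q_i either lies inside some R_k, or its path occupies spine vertices
   v_m, ..., v_(m+d-1) and P embeds in R_(m+i).  Since Q_i contains P, T avoids
   Q_i iff R_k avoids P for the L-d+1 positions i <= k <= L-d+i and R_k avoids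
   Q_i for the other k.  The number of trees of size n whose spine subtrees
   satisfy prescribed predicates is a convolution of the individual counts, so
   it is invariant under permuting the predicates (swap adjacent spine
   subtrees) and only depends on their counts on smaller trees.  Moving the
   window from i to j is a permutation, and by induction on n avoiding Q_i and
   avoiding Q_j have the same counts on the strictly smaller subtrees. *)

From Stdlib Require Import ClassicalEpsilon.
From HB Require Import structures.
From mathcomp Require Import all_boot zify.
Set Implicit Arguments. Unset Strict Implicit. Unset Printing Implicit Defensive.

(** * Enumerating trees by size *)

Fixpoint btree_eqb (t t' : btree) : bool :=
  match t, t' with
  | Leaf, Leaf => true
  | Node l r, Node l' r' => btree_eqb l l' && btree_eqb r r'
  | _, _ => false
  end.

Lemma btree_eqP : Equality.axiom btree_eqb.
Proof.
elim=> [|l IHl r IHr] [|l' r'] /=; try by constructor.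
apply: (iffP andP) => [[/IHl -> /IHr ->] // | [<- <-]].
by split; [apply/IHl | apply/IHr].
Qed.

HB.instance Definition _ := hasDecEq.Build btree btree_eqP.

Fixpoint height (t : btree) : nat :=
  if t is Node l r then (maxn (height l) (height r)).+1 else 0.

Lemma height_le_size t : height t <= bsize t.
Proof. by elim: t => [|l IHl r IHr] //=; rewrite ltnS geq_max; lia. Qed.

Lemma mem_trees_upto h t : (t \in trees_upto h) = (height t <= h).
Proof.
elim: h t => [|h IH] [|l r] //=.
rewrite in_cons /= ltnS geq_max -!IH.
apply/mapP/andP => [[_ /allpairsP [[l' r'] [/= l'h r'h ->]] [-> ->]] // | [lh rh]].
by exists (l, r) => //; apply/allpairsP; exists (l, r).
Qed.

Lemma uniq_trees_upto h : uniq (trees_upto h).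
Proof.
elim: h => [|h IH] //=; apply/andP; split; first by apply/mapP => -[].
rewrite map_inj_uniq; first by apply: allpairs_uniq => // -[? ?] [? ?].
by move=> [l r] [l' r'] [-> ->].
Qed.

Lemma mem_trees n t : (t \in trees n) = (bsize t == n).
Proof.
rewrite mem_filter mem_trees_upto.
by case: (bsize t =P n) => [<-|]; rewrite ?height_le_size.
Qed.

Lemma uniq_trees n : uniq (trees n).
Proof. by rewrite filter_uniq ?uniq_trees_upto. Qed.

Lemma perm_trees_upto n h :
  n <= h -> perm_eq (trees n) [seq t <- trees_upto h | bsize t == n].
Proof.
move=> le_n_h; apply: uniq_perm; rewrite ?uniq_trees ?filter_uniq ?uniq_trees_upto //.
move=> t; rewrite mem_trees mem_filter mem_trees_upto.
case: (bsize t =P n) => //= bsize_t; rewrite ?andbF //.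
by rewrite (leq_trans (height_le_size t)) ?bsize_t.
Qed.

Lemma count_trees_involution (f : btree -> btree) (p : pred btree) n :
  involutive f -> (forall t, bsize (f t) = bsize t) ->
  count (p \o f) (trees n) = count p (trees n).
Proof.
move=> fK bsize_f; rewrite -count_map; apply/permP/uniq_perm.
- by rewrite map_inj_uniq ?uniq_trees //; apply: inv_inj.
- exact: uniq_trees.
by move=> t; rewrite -{1}(fK t) mem_map ?mem_trees ?bsize_f //; apply: inv_inj.
Qed.

Lemma sum_trees_upto_by_size n (F : btree -> nat) :
  (forall t, n < bsize t -> F t = 0) ->
  \sum_(t <- trees_upto n) F t = \sum_(k < n.+1) \sum_(t <- trees k) F t.
Proof.
move=> F0; rewrite [RHS](eq_bigr (fun k : 'I_n.+1 =>
    \sum_(t <- trees_upto n) if bsize t == k then F t else 0)); last first.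
  by move=> k _; rewrite (perm_big _ (perm_trees_upto (leq_ord k))) big_filter big_mkcond.
rewrite exchange_big; apply: eq_bigr => t _ /=.
rewrite -big_mkcond (eq_bigl (fun k : 'I_n.+1 => k == bsize t :> nat)); last first.
  by move=> k; rewrite eq_sym.
by rewrite (big_ord1_eq _ (fun=> F t)); case: ltnP => // /F0.
Qed.

Lemma count_trees_node (q : btree -> btree -> bool) n :
  count (fun t => if t is Node l r then q l r else false) (trees n.+1) =
  \sum_(k < n.+1) \sum_(l <- trees k) count (q l) (trees (n - k)).
Proof.
rewrite count_filter /= add0n count_map -sum1_count big_mkcond big_allpairs /=.
rewrite sum_trees_upto_by_size => [|l lt_n_l]; last first.
  by rewrite big1 // => r _; rewrite eqSS gtn_eqF ?andbF // ltn_addr.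
apply: eq_bigr => k _; apply: eq_big_seq => l; rewrite mem_trees => /eqP size_l.
rewrite (permP (perm_trees_upto (leq_subr k n))) count_filter -sum1_count [RHS]big_mkcond.
apply: eq_bigr => r _ /=; rewrite eqSS size_l.
by congr (if q l r && _ then 1 else 0); apply/eqP/eqP; have := ltn_ord k; lia.
Qed.

Lemma count_partition_nat (T : Type) (f : T -> nat) N (p : pred T) s :
  all (fun x => f x < N) s ->
  count p s = \sum_(k < N) count (fun x => p x && (f x == k)) s.
Proof.
elim: s => [|x s IH] /=; first by rewrite big1.
case/andP => lt_x /IH ->; rewrite big_split /=; congr (_ + _).
rewrite (eq_bigr (fun k : 'I_N => if k == f x :> nat then nat_of_bool (p x) else 0)).
  by rewrite -big_mkcond (big_ord1_eq _ (fun=> nat_of_bool (p x))) lt_x.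
by move=> k _; rewrite eq_sym; case: eqP; rewrite ?andbT ?andbF.
Qed.

(** * Addresses and the left spine *)

Lemma catI (T : Type) : right_injective (@cat T).
Proof. by move=> s; elim: s => [|x s IH] //= a b [/IH]. Qed.

Lemma nseqS_rcons (T : Type) n (x : T) : nseq n.+1 x = rcons (nseq n x) x.
Proof. by elim: n => //= n ->. Qed.

Fixpoint subtree (t : btree) (a : seq bool) {struct a} : btree :=
  match a with
  | [::] => t
  | b :: a' => if t is Node l r then subtree (if b then r else l) a' else Leaf
  end.

Lemma subtree_Leaf a : subtree Leaf a = Leaf.
Proof. by case: a. Qed.

Lemma subtree_cat t a b : subtree t (a ++ b) = subtree (subtree t a) b.
Proof. by elim: a t => [|x a IH] [|l r] //=; rewrite subtree_Leaf. Qed.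

Lemma mem_nodes_cons b a l r :
  (b :: a \in nodes (Node l r)) = (a \in nodes (if b then r else l)).
Proof.
have cons_inj c : injective (@cons bool c) by move=> x y [].
rewrite /= in_cons /= mem_cat; case: b.
  by rewrite mem_map //; case: mapP => // -[x _ []].
by rewrite mem_map //; case: (mapP (f := cons true)) => [[x _ []]|]; rewrite ?orbF.
Qed.

Lemma mem_nodes_subtree t a b : (a ++ b \in nodes t) = (b \in nodes (subtree t a)).
Proof. by elim: a t => [|x a IH] [|l r] //; rewrite cat_cons mem_nodes_cons IH. Qed.

Lemma mem_nodesE t a : (a \in nodes t) = (subtree t a != Leaf).
Proof. by rewrite -[a]cats0 mem_nodes_subtree cats0; case: (subtree t a). Qed.

Lemma mem_nodes_catl t a b : a ++ b \in nodes t -> a \in nodes t.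
Proof. by rewrite mem_nodes_subtree (mem_nodesE t a); case: (subtree t a). Qed.

Fixpoint spine_len (t : btree) : nat :=
  if t is Node l _ then (spine_len l).+1 else 0.

Lemma spine_len_le_size t : spine_len t <= bsize t.
Proof. by elim: t => //= l IH r _; lia. Qed.

Definition spine_right (k : nat) : seq bool := rcons (nseq k false) true.

Fixpoint spine_sub (t : btree) (k : nat) : btree :=
  match t, k with
  | Node _ r, 0 => r
  | Node l _, k'.+1 => spine_sub l k'
  | Leaf, _ => Leaf
  end.

Lemma spine_subE t k : spine_sub t k = subtree t (spine_right k).
Proof. by elim: k t => [|k IH] [|l r] //=; rewrite subtree_Leaf. Qed.

Lemma mem_nodes_nseq t m : (nseq m false \in nodes t) = (m < spine_len t).
Proof.
by elim: m t => [|m IH] [|l r] //; rewrite [nseq _ _]/= mem_nodes_cons IH.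
Qed.

Lemma spine_len_subtree_nseq t k :
  spine_len (subtree t (nseq k false)) = spine_len t - k.
Proof. by elim: k t => [|k IH] [|l r] //=; rewrite ?subtree_Leaf ?IH. Qed.

Lemma spine_sub_subtree_nseq t k i :
  spine_sub (subtree t (nseq k false)) i = spine_sub t (k + i).
Proof. by rewrite !spine_subE -subtree_cat /spine_right -rcons_cat -nseqD. Qed.

Lemma nseq_neq_spine_right_cat m i p : nseq m false <> spine_right i ++ p.
Proof.
move=> eq_nseq; have := mem_nseq m false true.
by rewrite eq_nseq mem_cat mem_rcons mem_head andbF.
Qed.

Lemma spine_address u :
  (exists m, u = nseq m false) \/ (exists k p, u = spine_right k ++ p).
Proof.
elim: u => [|[] u IH]; first by left; exists 0.
  by right; exists 0, u.
by case: IH => [[m ->] | [k [p ->]]]; [left; exists m.+1 | right; exists k.+1, p].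
Qed.

Lemma exists_subtree_spine (X : btree -> Prop) t : ~ X Leaf ->
  (exists u, X (subtree t u)) <->
  (exists2 m, m < spine_len t & X (subtree t (nseq m false))) \/
  (exists2 k, k < spine_len t & exists p, X (subtree (spine_sub t k) p)).
Proof.
move=> notX_Leaf; split; last first.
  case=> [[m _ Xm] | [k _ [p Xp]]]; first by exists (nseq m false).
  by exists (spine_right k ++ p); rewrite subtree_cat -spine_subE.
have node_of_X a : X (subtree t a) -> a \in nodes t.
  by rewrite mem_nodesE; case: (subtree t a) => // /notX_Leaf.
case=> u Xu; have u_t := node_of_X u Xu.
case: (spine_address u) Xu u_t => [[m ->] | [k [p ->]]] Xu u_t.
  by left; exists m; rewrite -?mem_nodes_nseq.
right; exists k; last by exists p; rewrite spine_subE -subtree_cat.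
by rewrite -mem_nodes_nseq (@mem_nodes_catl _ _ [:: true]) // cats1 (mem_nodes_catl u_t).
Qed.

(** * Counting trees by their right subtrees along the spine *)

Fixpoint spine_all (ps : seq (pred btree)) (t : btree) : bool :=
  match ps, t with
  | [::], Leaf => true
  | p :: ps', Node l r => spine_all ps' l && p r
  | _, _ => false
  end.

Lemma spine_allP ps t :
  spine_all ps t <->
  size ps = spine_len t /\ forall k, k < size ps -> nth xpredT ps k (spine_sub t k).
Proof.
elim: ps t => [|p ps IH] [|l r] /=.
- by [].
- by split=> // -[].
- by split=> // -[].
split=> [/andP [/IH [size_ps ps_l] p_r] | [[size_ps] ps_t]].
  by split=> [|[|k] //= lt_k]; [rewrite size_ps | apply: ps_l].
by apply/andP; split; [apply/IH; split=> // k lt_k; apply: (ps_t k.+1) | apply: (ps_t 0)].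
Qed.

Lemma count_spine_all_cons p ps n :
  count (spine_all (p :: ps)) (trees n.+1) =
  \sum_(k < n.+1) count (spine_all ps) (trees k) * count p (trees (n - k)).
Proof.
rewrite (@eq_count _ _ (fun t => if t is Node l r then spine_all ps l && p r else false));
  last by case.
rewrite count_trees_node; apply: eq_bigr => k _.
rewrite -sum1_count big_distrl [RHS]big_mkcond /=; apply: eq_bigr => l _.
by case: (spine_all ps l); rewrite ?mul1n ?mul0n ?count_pred0.
Qed.

Lemma eq_count_spine_all ps ps' n :
  size ps = size ps' ->
  (forall k m, k < size ps -> m < n ->
     count (nth xpredT ps k) (trees m) = count (nth xpredT ps' k) (trees m)) ->
  count (spine_all ps) (trees n) = count (spine_all ps') (trees n).
Proof.
elim: ps ps' n => [|p ps IH] [|p' ps'] [|n] //= [size_ps] eq_nth.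
rewrite !count_spine_all_cons; apply: eq_bigr => k _.
have lt_k := ltn_ord k; rewrite (eq_nth 0 (n - k)) //; last by lia.
congr (_ * _); apply: IH => // i m lt_i lt_m.
by apply: (eq_nth i.+1) => //; lia.
Qed.

Fixpoint spine_swap (k : nat) (t : btree) : btree :=
  match k, t with
  | 0, Node (Node l x) y => Node (Node l y) x
  | k'.+1, Node l r => Node (spine_swap k' l) r
  | _, t => t
  end.

Lemma spine_swapK k : involutive (spine_swap k).
Proof. by elim: k => [|k IH] [|[|l x] y] //=; rewrite IH. Qed.

Lemma bsize_spine_swap k t : bsize (spine_swap k t) = bsize t.
Proof. by elim: k t => [|k IH] [|[|l x] y] //=; rewrite ?IH //; lia. Qed.

Lemma spine_all_swap ps a b qs t :
  spine_all (ps ++ a :: b :: qs) (spine_swap (size ps) t) =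
  spine_all (ps ++ b :: a :: qs) t.
Proof.
elim: ps t => [|p ps IH] [|l r] //=; last by rewrite IH.
by case: l => [|l x] //=; rewrite -!andbA (andbC (b r)).
Qed.

Lemma count_spine_all_swap ps a b qs n :
  count (spine_all (ps ++ a :: b :: qs)) (trees n) =
  count (spine_all (ps ++ b :: a :: qs)) (trees n).
Proof.
rewrite -(count_trees_involution _ _ (spine_swapK (size ps)) (bsize_spine_swap _)).
by apply: eq_count => t; rewrite /= spine_all_swap.
Qed.

Lemma count_spine_all_move ps p qs rs n :
  count (spine_all (ps ++ p :: qs ++ rs)) (trees n) =
  count (spine_all (ps ++ qs ++ p :: rs)) (trees n).
Proof.
elim: qs ps => [|q qs IH] ps //=.
by rewrite count_spine_all_swap -cat_rcons IH cat_rcons.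
Qed.

Lemma count_spine_all_catCA ps qs1 qs2 rs n :
  count (spine_all (ps ++ qs1 ++ qs2 ++ rs)) (trees n) =
  count (spine_all (ps ++ qs2 ++ qs1 ++ rs)) (trees n).
Proof.
elim: qs1 ps => [|q qs1 IH] ps //=.
by rewrite -cat_rcons IH cat_rcons count_spine_all_move.
Qed.

Lemma count_spine_all_perm (T : eqType) (F : T -> pred btree) s1 s2 n :
  perm_eq s1 s2 ->
  count (spine_all (map F s1)) (trees n) = count (spine_all (map F s2)) (trees n).
Proof.
apply: (catCA_perm_subst (F := fun s => count (spine_all (map F s)) (trees n))).
by move=> s1' s2' s3'; rewrite !map_cat (count_spine_all_catCA [::]).
Qed.

(* The spine positions of a tree with [L] spine vertices that can receive the
   copy of [P] in an occurrence of [Q_i] whose path starts at spine vertex [k - i]. *)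
Definition window (d i L : nat) : seq bool :=
  mkseq (fun k => (i <= k) && (k + d <= L + i)) L.

Lemma windowE d i L : i < d ->
  window d i L =
  if d <= L then nseq i false ++ nseq (L.+1 - d) true ++ nseq (d.-1 - i) false
  else nseq L false.
Proof.
move=> lt_i_d; apply: (@eq_from_nth _ false) => [|k].
  by rewrite size_mkseq; case: (leqP d L) => ?; rewrite ?size_cat ?size_nseq //; lia.
rewrite size_mkseq => lt_k_L; rewrite nth_mkseq //.
case: (leqP d L) => ?; rewrite ?nth_cat ?size_nseq ?nth_nseq; repeat case: ifP; lia.
Qed.

Lemma perm_window d i j L : i < d -> j < d -> perm_eq (window d i L) (window d j L).
Proof.
move=> lt_i_d lt_j_d; rewrite !windowE //; case: leqP => // _.
rewrite perm_catCA perm_sym perm_catCA perm_cat2l -!nseqD.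
by have -> : i + (d.-1 - i) = j + (d.-1 - j) by lia.
Qed.

Lemma nth_window_preds (A B : pred btree) d i L k : k < L ->
  nth xpredT [seq if b then B else A | b <- window d i L] k =
  if (i <= k) && (k + d <= L + i) then B else A.
Proof. by move=> lt_k; rewrite (nth_map false) ?size_mkseq // nth_mkseq. Qed.

(** * Embeddings *)

(* [contains T Q] is convertible to [exists f, embedding Q T f]. *)
Definition embedding (Q : pattern) (T : btree) (f : seq bool -> seq bool) : Prop :=
  {in nodes (pat_tree Q) &, injective f} /\
  {in nodes (pat_tree Q), forall a, f a \in nodes T} /\
  (forall a b, rcons a b \in nodes (pat_tree Q) ->
     if pat_e Q (rcons a b) then f (rcons a b) = rcons (f a) b
     else exists s, f (rcons a b) = rcons (f a) b ++ s).

Lemma embedding_subtree Q T a f :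
  embedding Q (subtree T a) f -> embedding Q T (fun x => a ++ f x).
Proof.
move=> [f_inj [f_T f_edge]]; split; [|split].
- by move=> x y xQ yQ /catI; apply: f_inj.
- by move=> x xQ; rewrite mem_nodes_subtree f_T.
move=> x b xbQ; have := f_edge x b xbQ.
case: (pat_e Q _) => [-> | [s ->]]; rewrite rcons_cat //.
by exists s; rewrite catA.
Qed.

Lemma contains_subtree T a Q : contains (subtree T a) Q -> contains T Q.
Proof. by case=> f /embedding_subtree emb; exists (fun x => a ++ f x). Qed.

Lemma embedding_ext P e e' T f :
  (forall a b, e (rcons a b) = e' (rcons a b)) ->
  embedding (Pattern P e) T f -> embedding (Pattern P e') T f.
Proof.
move=> eq_e [f_inj [f_T f_edge]]; split=> //; split=> // a b /=.
by rewrite -eq_e; apply: f_edge.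
Qed.

Lemma embedding_cat P e T f a b :
  embedding (Pattern P e) T f -> a ++ b \in nodes P -> exists s, f (a ++ b) = f a ++ s.
Proof.
move=> [_ [_ f_edge]]; elim/last_ind: b => [|b c IH] abcP.
  by exists [::]; rewrite !cats0.
have /IH [s f_ab] : a ++ b \in nodes P.
  by apply: (@mem_nodes_catl _ _ [:: c]); rewrite -catA cats1.
move: (f_edge (a ++ b) c); rewrite /= rcons_cat => /(_ abcP).
case: (e _) => [-> | [s' ->]]; rewrite f_ab rcons_cat; first by exists (rcons s c).
by exists (rcons s c ++ s'); rewrite catA.
Qed.

Lemma embedding_restrict P e T f a :
  embedding (Pattern P e) T f ->
  embedding (Pattern (subtree P a) (fun x => e (a ++ x))) (subtree T (f a))
            (fun x => drop (size (f a)) (f (a ++ x))).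
Proof.
move=> emb_f; have [f_inj [f_T f_edge]] := emb_f.
set g := fun x => drop _ _.
have f_cat x : x \in nodes (subtree P a) -> f (a ++ x) = f a ++ g x.
  rewrite -mem_nodes_subtree => /(embedding_cat emb_f) [s f_ax].
  by rewrite /g f_ax drop_size_cat.
split; [|split] => /=.
- move=> x y xP yP eq_g; apply: (@catI _ a); apply: f_inj; rewrite ?mem_nodes_subtree //.
  by rewrite !f_cat // eq_g.
- by move=> x xP; rewrite -mem_nodes_subtree -f_cat // f_T ?mem_nodes_subtree.
move=> x b xbP; have xP : x \in nodes (subtree P a).
  by apply: (@mem_nodes_catl _ _ [:: b]); rewrite cats1.
move: (f_edge (a ++ x) b); rewrite /= !rcons_cat mem_nodes_subtree => /(_ xbP).
rewrite !f_cat // rcons_cat; case: (e _) => [/catI // | [s]].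
by rewrite -catA => /catI ->; exists s.
Qed.

Lemma contains_Leaf_pattern T e : contains T (Pattern Leaf e).
Proof. by exists id. Qed.

Lemma containsbP T Q : reflect (contains T Q) (containsb T Q).
Proof. by rewrite /containsb; case: excluded_middle_informative => h; constructor. Qed.

Definition avoids (Q : pattern) : pred btree := fun T => ~~ containsb T Q.

(** * Occurrences of a pattern grafted onto a left path *)

Lemma spine_len_left_path_attach d i P :
  i < d -> spine_len (left_path_attach d i P) = d.
Proof.
elim: d i => [|d IH] [|i] //= lt_i_d; last by rewrite IH.
by elim: d {IH lt_i_d} => //= d ->.
Qed.

Lemma spine_sub_left_path_attach d i P k : i < d ->
  spine_sub (left_path_attach d i P) k = if k == i then P else Leaf.
Proof.
have left_pathE d' k' : spine_sub (left_path d') k' = Leaf.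
  by elim: d' k' => [|d' IH] [|k'] //=.
by elim: d i k => [|d IH] [|i] [|k] //= lt_i_d; rewrite ?IH.
Qed.

Lemma attach_e_nseq i e m : attach_e i e (nseq m false) = true.
Proof.
rewrite /attach_e /=; case: andP => // -[_ /eqP take_m].
have : true \in rcons (nseq i false) true by rewrite mem_rcons mem_head.
by rewrite -take_m => /mem_take; rewrite mem_nseq andbF.
Qed.

Lemma attach_e_graft_root i e : attach_e i e (spine_right i) = false.
Proof. by rewrite /attach_e /= leqnn take_size eqxx drop_size. Qed.

Lemma attach_e_graft_rcons i e p b :
  attach_e i e (spine_right i ++ rcons p b) = e (rcons p b).
Proof.
by rewrite /attach_e /= size_cat leq_addr take_size_cat // eqxx drop_size_cat //; case: p.
Qed.

(* An occurrence of [Q_i] can be rooted at the root of [t]. *)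
Definition hosts (d i : nat) (Pe : pattern) (t : btree) : Prop :=
  d <= spine_len t /\ contains (spine_sub t i) Pe.

Definition graft_map (i : nat) (g : seq bool -> seq bool) (x : seq bool) : seq bool :=
  if prefix (spine_right i) x then spine_right i ++ g (drop (size (spine_right i)) x)
  else x.

Section AttachPattern.

Variables (d i : nat) (P : btree) (e : seq bool -> bool).
Hypothesis lt_i_d : i < d.

Local Notation Q := (attach_pattern d i (Pattern P e)).

Lemma mem_nodes_attach_spine m :
  (nseq m false \in nodes (left_path_attach d i P)) = (m < d).
Proof. by rewrite mem_nodes_nseq spine_len_left_path_attach. Qed.

Lemma mem_nodes_attach_graft p :
  (spine_right i ++ p \in nodes (left_path_attach d i P)) = (p \in nodes P).
Proof. by rewrite mem_nodes_subtree -spine_subE spine_sub_left_path_attach // eqxx. Qed.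

Lemma nodes_attachP x : x \in nodes (left_path_attach d i P) ->
  (exists2 m, m < d & x = nseq m false) \/
  (exists2 p, p \in nodes P & x = spine_right i ++ p).
Proof.
case: (spine_address x) => [[m ->] | [k [p ->]]].
  by rewrite mem_nodes_attach_spine; left; exists m.
rewrite mem_nodes_subtree -spine_subE spine_sub_left_path_attach //.
by case: eqP => [-> | _] // pP; right; exists p.
Qed.

Lemma contains_attach_hosts T :
  contains T Q -> exists u, hosts d i (Pattern P e) (subtree T u).
Proof.
case=> f emb_f; have [_ [f_T f_edge]] := emb_f; exists (f [::]).
have f_spine m : m < d -> f (nseq m false) = f [::] ++ nseq m false.
  elim: m => [|m IH] lt_m; first by rewrite cats0.
  move: (f_edge (nseq m false) false); rewrite /= -nseqS_rcons attach_e_nseq.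
  by rewrite mem_nodes_attach_spine => -> //; rewrite IH 1?ltnW // rcons_cat -nseqS_rcons.
split.
  have := f_T (nseq d.-1 false); rewrite mem_nodes_attach_spine f_spine; try lia.
  by rewrite mem_nodes_subtree mem_nodes_nseq; lia.
(* For empty [P] there is no edge from the path into [P]. *)
have [-> | P_node] := eqVneq P Leaf; first exact: contains_Leaf_pattern.
have [s f_graft] : exists s, f (spine_right i) = (f [::] ++ spine_right i) ++ s.
  have pre_Q : spine_right i \in nodes (left_path_attach d i P).
    by rewrite -[spine_right i]cats0 mem_nodes_attach_graft mem_nodesE.
  move: (f_edge (nseq i false) true pre_Q); rewrite /= attach_e_graft_root.
  by case=> s ->; exists s; rewrite f_spine // rcons_cat.
have emb_g := embedding_restrict (spine_right i) emb_f.
rewrite /= -spine_subE spine_sub_left_path_attach // eqxx f_graft subtree_cat in emb_g.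
rewrite spine_subE -subtree_cat; apply: (contains_subtree (a := s)).
by eexists; apply: embedding_ext emb_g => a b; rewrite attach_e_graft_rcons.
Qed.

Lemma hosts_contains_attach T : hosts d i (Pattern P e) T -> contains T Q.
Proof.
case=> le_d_T [g [g_inj [g_T g_edge]]]; exists (graft_map i g).
have f_spine m : graft_map i g (nseq m false) = nseq m false.
  by rewrite /graft_map; case: prefixP => // -[s /nseq_neq_spine_right_cat].
have f_graft p : graft_map i g (spine_right i ++ p) = spine_right i ++ g p.
  by rewrite /graft_map prefix_prefix drop_size_cat.
split; [|split].
- move=> x y /nodes_attachP [[m _ ->] | [p pP ->]] /nodes_attachP [[m' _ ->] | [p' pP' ->]];
    rewrite ?f_spine ?f_graft //.
  + by move/nseq_neq_spine_right_cat.
  + by move/esym/nseq_neq_spine_right_cat.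
  + by move/catI/g_inj ->.
- move=> x /nodes_attachP [[m lt_m ->] | [p pP ->]]; rewrite ?f_spine ?f_graft.
    by rewrite mem_nodes_nseq; lia.
  by rewrite mem_nodes_subtree -spine_subE g_T.
move=> a b /nodes_attachP [[[|m] _ eq_ab] | [p pP eq_ab]].
- by move/(congr1 size): eq_ab; rewrite size_rcons.
- move: eq_ab; rewrite nseqS_rcons => /rcons_inj [-> ->].
  by rewrite /= -nseqS_rcons attach_e_nseq !f_spine nseqS_rcons.
case/lastP: p pP eq_ab => [|p c] pP; rewrite ?cats0 -?rcons_cat => /rcons_inj [-> ->] /=.
  rewrite attach_e_graft_root -[rcons _ true]cats0 f_graft f_spine.
  by exists (g [::]).
rewrite rcons_cat attach_e_graft_rcons !f_graft rcons_cat.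
move: (g_edge p c pP) => /=; case: (e _) => [-> // | [s ->]].
by exists s; rewrite catA.
Qed.

Lemma contains_attach_pattern T : contains T Q -> contains T (Pattern P e).
Proof.
case/contains_attach_hosts => u [_].
by rewrite spine_subE -subtree_cat => /contains_subtree.
Qed.

Lemma contains_attach_spine T :
  contains T Q <->
  (exists2 k, k + d <= spine_len T & contains (spine_sub T (k + i)) (Pattern P e)) \/
  (exists2 k, k < spine_len T & contains (spine_sub T k) Q).
Proof.
have not_hosts_Leaf : ~ hosts d i (Pattern P e) Leaf by case=> /=; lia.
split=> [/contains_attach_hosts /(exists_subtree_spine _ not_hosts_Leaf) | ].
  case=> [[k _ [len_k Pk]] | [k lt_k [p /hosts_contains_attach /contains_subtree Qk]]].
    left; exists k; last by rewrite -spine_sub_subtree_nseq.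
    by move: len_k; rewrite spine_len_subtree_nseq; lia.
  by right; exists k.
case=> [[k le_k Pk] | [k _]]; last by rewrite spine_subE => /contains_subtree.
apply: (contains_subtree (a := nseq k false)); apply: hosts_contains_attach.
by rewrite /hosts spine_len_subtree_nseq spine_sub_subtree_nseq; split=> //; lia.
Qed.

Lemma avoids_attach T :
  avoids Q T =
  spine_all [seq if b then avoids (Pattern P e) else avoids Q
            | b <- window d i (spine_len T)] T.
Proof.
apply/idP/idP => [avoid_T | /spine_allP [_ preds_T]].
  apply/spine_allP; rewrite size_map size_mkseq; split=> // k lt_k.
  rewrite nth_window_preds //; case: ifP => [/andP [le_i_k le_k] | _];
    apply: contraNN avoid_T => /containsbP C; apply/containsbP/contains_attach_spine.
    by left; exists (k - i); rewrite ?subnK //; lia.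
  by right; exists k.
rewrite size_map size_mkseq in preds_T.
apply/negP => /containsbP /contains_attach_spine [[k le_k /containsbP Pk] | [k lt_k Qk]].
  have /preds_T : k + i < spine_len T by lia.
  by rewrite nth_window_preds ?ifT /avoids ?Pk //; lia.
move: (Qk) (preds_T k lt_k) => /contains_attach_pattern /containsbP Pk.
move/containsbP in Qk.
by rewrite nth_window_preds //; case: ifP; rewrite /avoids ?Pk ?Qk.
Qed.

Lemma num_avoiders_attach n :
  num_avoiders Q n =
  \sum_(L < n.+1) count (spine_all
    [seq if b then avoids (Pattern P e) else avoids Q | b <- window d i L]) (trees n).
Proof.
rewrite /num_avoiders (count_partition_nat (f := spine_len) (N := n.+1)); last first.
  by apply/allP => t; rewrite mem_trees ltnS => /eqP <-; apply: spine_len_le_size.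
apply: eq_bigr => L _; apply: eq_count => t /=.
have -> : ~~ containsb t Q = avoids Q t by [].
rewrite avoids_attach; case: eqP => [-> | neq_L]; rewrite ?andbT ?andbF //.
by apply/esym/negbTE/negP => /spine_allP [/esym]; rewrite size_map size_mkseq.
Qed.

End AttachPattern.

Theorem lemma18 (d i j : nat) (Pe : pattern) :
  i < d -> j < d -> i != j ->
  wilf_equiv (attach_pattern d i Pe) (attach_pattern d j Pe).
Proof.
move=> lt_i_d lt_j_d _ n; case: Pe => P e.
elim/ltn_ind: n => n IH; rewrite !num_avoiders_attach //.
apply: eq_bigr => L _; rewrite (count_spine_all_perm _ _ (perm_window L lt_i_d lt_j_d)).
apply: eq_count_spine_all => [|k m]; rewrite !size_map // size_iota => lt_k lt_m.
by rewrite !nth_window_preds //; case: (_ && _) => //; apply: IH.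
Qed.
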